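(* Let $\mathbf{A}\in\mathbb{R}^{(\ell n)\times(qn)}$ be a block matrix with $\ell\times q$ blocks of size $n\times n$, with distinct nonzero blocks $\mathbf{A}_1,\dots,\mathbf{A}_p$. Suppose each $\mathbf{A}_k$ has upper bandwidth $u_k$ and lower bandwidth $\ell_k$, and set $b_u=\max_k u_k$, $b_\ell=\max_k \ell_k$. Let $r_2$ be the second entry of the multilinear rank of the tensor associated with $\mathbf{A}$. Then $$r_2\le n+\sum_{i=1}^{b_u}(n-i)+\sum_{j=1}^{b_\ell}(n-j).$$
   Context: Blocks: $\mathbf{A}^{(\gamma,\delta)}_{\alpha\beta}=\mathbf{A}_{(\gamma-1)n+\alpha,(\delta-1)n+\beta}$; $\eta_k$ is the number of block positions at which $\mathbf{A}_k$ occurs. A matrix $\mathbf{M}\in\mathbb{R}^{n\times n}$ has upper bandwidth $u$ and lower bandwidth $l$ if $u,l$ are the smallest nonnegative integers such that $\mathbf{M}_{ij}=0$ whenever $j-i>u$ or $i-j>l$. The associated tensor $\mathcal{A}\in\mathbb{R}^{n\times p\times n}$ has entries $\mathcal{A}_{ikj}=\sqrt{\eta_k}[\mathbf{A}_k]_{ij}$, and $r_2=\mathrm{rank}(\mathbf{A}_{(2)})$ where $\mathbf{A}_{(2)}\in\mathbb{R}^{p\times n^2}$ has $k$th row $\mathrm{vec}(\sqrt{\eta_k}\mathbf{A}_k)^\top$. *)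

From HB Require Import structures.
From mathcomp Require Import all_boot all_order all_algebra.
From mathcomp Require Import reals.
Set Implicit Arguments. Unset Strict Implicit. Unset Printing Implicit Defensive.
Import Order.TTheory GRing.Theory Num.Theory.
Local Open Scope ring_scope.

(* Block (g,d) of a (ell*n) x (q*n) matrix: entry (a,b) is
   A_{g*n+a, d*n+b} (0-based), i.e. A^{(g,d)}_{ab} of the paper. *)
Definition blk (R : Type) (ell q n : nat) (A : 'M[R]_(ell * n, q * n))
  (g : 'I_ell) (d : 'I_q) : 'M[R]_n :=
  \matrix_(a < n, b < n) A (mxvec_index g a) (mxvec_index d b).

Definition eta (R : eqType) (ell q n : nat) (A : 'M[R]_(ell * n, q * n))
  (M : 'M[R]_n) : nat :=
  #|[set gd : 'I_ell * 'I_q | blk A gd.1 gd.2 == M]|.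

(* vec: column-stacking vectorization, as a row vector of length n*n. *)
Definition vecc (R : Type) (n : nat) (M : 'M[R]_n) : 'rV[R]_(n * n) :=
  mxvec M^T.

(* The mode-2 unfolding A_(2) of the associated tensor:
   k-th row is vec(sqrt(eta_k) A_k)^T. *)
Definition unfold2 (R : rcfType) (ell q n p : nat) (A : 'M[R]_(ell * n, q * n))
  (Ak : 'I_p -> 'M[R]_n) : 'M[R]_(p, n * n) :=
  \matrix_(k < p) vecc (Num.sqrt (eta A (Ak k))%:R *: Ak k).

(* r_2 = rank of A_(2) (second entry of the multilinear rank). *)
Definition r2 (R : rcfType) (ell q n p : nat) (A : 'M[R]_(ell * n, q * n))
  (Ak : 'I_p -> 'M[R]_n) : nat := \rank (unfold2 A Ak).

Definition is_upper_bandwidth (R : ringType) (n : nat) (M : 'M[R]_n) (u : nat) : Prop :=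
  (forall i j : 'I_n, (i + u < j)%N -> M i j = 0) /\
  (forall u' : nat, (forall i j : 'I_n, (i + u' < j)%N -> M i j = 0) -> (u <= u')%N).

Definition is_lower_bandwidth (R : ringType) (n : nat) (M : 'M[R]_n) (l : nat) : Prop :=
  (forall i j : 'I_n, (j + l < i)%N -> M i j = 0) /\
  (forall l' : nat, (forall i j : 'I_n, (j + l' < i)%N -> M i j = 0) -> (l <= l')%N).

From HB Require Import structures.
From mathcomp Require Import all_boot all_order all_algebra.
From mathcomp Require Import reals zify.
Import Order.TTheory GRing.Theory Num.Theory.

Set Implicit Arguments.
Unset Strict Implicit.
Unset Printing Implicit Defensive.

(* Row k of A_(2) is vec(sqrt(eta_k) A_k), and every A_k vanishes outside the
   band of positions (i, j) with -b_l <= j - i <= b_u.  Hence all rows of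
   A_(2) lie in the coordinate subspace indexed by the band, and r_2 is at
   most the number of band positions: n on the main diagonal and n - d on
   each diagonal at offset d.  Neither the scalings sqrt(eta_k) nor the block
   structure of A play any role. *)

Lemma card_bigcup_le (T I : finType) (r : seq I) (P : pred I) (F : I -> {set T}) :
  (#|\bigcup_(i <- r | P i) F i| <= \sum_(i <- r | P i) #|F i|)%N.
Proof.
elim/big_rec2: _ => [|i m U _ leUm]; first by rewrite cards0.
by rewrite (leq_trans (leq_card_setU _ _).1) ?leq_add2l.
Qed.

Section Band.

Variable n : nat.

Definition upper_diag (d : nat) : {set 'I_n * 'I_n} :=
  [set ij : 'I_n * 'I_n | ij.2 == ij.1 + d :> nat].
Definition lower_diag (d : nat) : {set 'I_n * 'I_n} :=
  [set ij : 'I_n * 'I_n | ij.1 == ij.2 + d :> nat].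

Definition band (bu bl : nat) : {set 'I_n * 'I_n} :=
  [set ij : 'I_n * 'I_n | (ij.2 <= ij.1 + bu) && (ij.1 <= ij.2 + bl)]%N.

Lemma card_lower_diag d : (#|lower_diag d| <= n - d)%N.
Proof.
have lt_n (i : 'I_(n - d)) : (i + d < n)%N by rewrite addnC -ltn_subRL.
pose f i := (Ordinal (lt_n i), widen_ord (leq_subr d n) i).
rewrite -[(n - d)%N]card_ord -[X in (_ <= X)%N]cardsT.
apply: leq_trans (leq_imset_card f _); apply: subset_leq_card.
apply/subsetP => -[i j]; rewrite inE /= => /eqP ij_d.
have lt_j : (j < n - d)%N by have := ltn_ord i; lia.
by apply/imsetP; exists (Ordinal lt_j); rewrite ?inE //; congr pair; apply: val_inj.
Qed.

Lemma card_upper_diag d : (#|upper_diag d| <= n - d)%N.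
Proof.
apply: leq_trans (card_lower_diag d).
rewrite -(card_imset (lower_diag d) (can_inj (@swap_pairK _ _))).
apply: subset_leq_card; apply/subsetP => -[i j] ij_d.
by apply/imsetP; exists (j, i); rewrite ?inE in ij_d *.
Qed.

Lemma band_sub_diags bu bl :
  band bu bl
    \subset (\bigcup_(d < bu.+1) upper_diag d) :|: \bigcup_(d < bl) lower_diag d.+1.
Proof.
apply/subsetP => -[i j]; rewrite inE /= => /andP[ji_bu ij_bl].
rewrite inE; case: (ltnP j i) => [lt_ji | le_ij].
  have lt_d : (i - j).-1 < bl by lia.
  by apply/orP; right; apply/bigcupP; exists (Ordinal lt_d); rewrite // inE /=; lia.
have lt_d : (j - i < bu.+1)%N by lia.
by apply/orP; left; apply/bigcupP; exists (Ordinal lt_d); rewrite // inE /=; lia.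
Qed.

Lemma card_band bu bl :
  (#|band bu bl| <= \sum_(d < bu.+1) (n - d) + \sum_(d < bl) (n - d.+1))%N.
Proof.
apply: leq_trans (subset_leq_card (band_sub_diags bu bl)) _.
apply: leq_trans (leq_card_setU _ _).1 _; apply: leq_add.
  apply: leq_trans (card_bigcup_le _ _ _) _.
  by apply: leq_sum => d _; exact: card_upper_diag.
apply: leq_trans (card_bigcup_le _ _ _) _.
by apply: leq_sum => d _; exact: card_lower_diag.
Qed.

Lemma bandwidth_zero_outside (R : nzRingType) (M : 'M[R]_n) u l bu bl :
  is_upper_bandwidth M u -> is_lower_bandwidth M l -> (u <= bu)%N -> (l <= bl)%N ->
  forall i j, (i, j) \notin band bu bl -> M i j = 0%R.
Proof.
move=> [zero_up _] [zero_low _] le_u le_l i j; rewrite inE /= negb_and -!ltnNge.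
by case/orP => out; [apply: zero_up | apply: zero_low]; lia.
Qed.

End Band.

Local Open Scope ring_scope.

Lemma mxrank_col_support (F : fieldType) m N (M : 'M[F]_(m, N)) (T : {set 'I_N}) :
  (forall i j, j \notin T -> M i j = 0) -> (\rank M <= #|T|)%N.
Proof.
move=> M_T.
have -> : M = colsub enum_val M *m rowsub (@enum_val _ (mem T)) 1%:M.
  apply/matrixP => i j; rewrite !mxE; under eq_bigr do rewrite !mxE.
  rewrite -(big_enum_val (fun k => M i k * (k == j)%:R)) /=.
  case: (boolP (j \in T)) => [Tj | notTj].
    rewrite (bigD1 j) //= eqxx mulr1 big1 ?addr0 // => k /andP[_ /negbTE ->].
    by rewrite mulr0.
  rewrite M_T // big1 // => k Tk; rewrite (_ : k == j = false) ?mulr0 //.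
  by apply: contraNF notTj => /eqP <-.
exact: leq_trans (mxrankM_maxr _ _) (rank_leq_row _).
Qed.

(* vec stacks columns, so entry (i, j) sits at position mxvec_index j i. *)
Lemma unfold2_band_support (R : rcfType) ell q n p (A : 'M[R]_(ell * n, q * n))
    (Ak : 'I_p -> 'M[R]_n) bu bl :
  (forall k i j, (i, j) \notin band n bu bl -> Ak k i j = 0) ->
  forall k c, c \notin [set mxvec_index ij.2 ij.1 | ij in band n bu bl] ->
  unfold2 A Ak k c = 0.
Proof.
move=> band_Ak k c; rewrite mxE; case: (mxvec_indexP c) => j i out.
rewrite /vecc mxvecE !mxE band_Ak ?mulr0 //.
by apply: contra out => ij_band; apply/imsetP; exists (i, j).
Qed.

Theorem corollary2 (R : realType) (ell q n p : nat)
  (A : 'M[R]_(ell * n, q * n)) (Ak : 'I_p -> 'M[R]_n)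
  (Ak_inj : injective Ak)
  (Ak_nz : forall k, Ak k != 0)
  (Ak_blocks : forall k, exists g d, blk A g d = Ak k)
  (blocks_Ak : forall g d, blk A g d != 0 -> exists k, blk A g d = Ak k)
  (u l : 'I_p -> nat)
  (hu : forall k, is_upper_bandwidth (Ak k) (u k))
  (hl : forall k, is_lower_bandwidth (Ak k) (l k)) :
  let bu := (\max_(k < p) u k)%N in
  let bl := (\max_(k < p) l k)%N in
  (r2 A Ak <= n + \sum_(1 <= i < bu.+1) (n - i) + \sum_(1 <= j < bl.+1) (n - j))%N.
Proof.
cbv zeta; set bu := (\max_(k < p) u k)%N; set bl := (\max_(k < p) l k)%N.
have band_Ak k : forall i j, (i, j) \notin band n bu bl -> Ak k i j = 0.
  by apply: bandwidth_zero_outside (hu k) (hl k) _ _; apply: leq_bigmax.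
apply: leq_trans (mxrank_col_support (unfold2_band_support A band_Ak)) _.
apply: leq_trans (leq_imset_card _ _) _.
apply: leq_trans (card_band n bu bl) _.
rewrite -(big_mkord xpredT (fun d => n - d)%N) big_ltn // subn0.
by rewrite -(big_mkord xpredT (fun d => n - d.+1)%N) [\sum_(1 <= j < bl.+1) _]big_add1.
Qed.
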